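(* Let $H=\operatorname{diag}(\lambda_1,\dots,\lambda_n)$ with $\lambda_1\ge\dots\ge\lambda_{n-p}\ge0>\lambda_{n-p+1}\ge\dots\ge\lambda_n$ for some $1\le p<n$, let $L=\max(\lambda_1,-\lambda_n)$ and $0<\alpha<1/L$. Let $(\gamma_k)_{k\ge1}$, $(\beta_k)_{k\ge1}$ be sequences in $[0,1]$ with $\gamma_{k+1}\ge\gamma_k$ and $\beta_{k+1}\ge\beta_k$ for all $k$, and let $\bar\gamma=\lim_{k\to\infty}\gamma_k$, $\bar\beta=\lim_{k\to\infty}\beta_k$. For $i$ with $\lambda_i<0$ define $b_{i,0}=0$ and, for $k\ge1$, \[ b_{i,k}=(\beta_k+\gamma_k\alpha|\lambda_i|)\Big(1-\frac{1}{1+b_{i,k-1}}\Big)+\alpha|\lambda_i|. \] Then for all $i$ with $\lambda_i<0$, $\lim_{k\to\infty}b_{i,k}=\bar b_i$, where \[ \bar b_i=\tfrac12\big(\bar\beta-1+\alpha|\lambda_i|(1+\bar\gamma)\big)+\tfrac12\sqrt{\big(\bar\beta-1+\alpha|\lambda_i|(1+\bar\gamma)\big)^2+4\alpha|\lambda_i|}. \]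
   Context: The quantities $b_{i,k}$ describe the per-iteration growth factors $x_i^{k+1}=x_i^0\prod_{m=0}^k(1+b_{i,m})$ of the components along negative-curvature directions for the accelerated gradient iteration $y^k=x^k+\gamma_k(x^k-x^{k-1})$, $x^{k+1}=x^k+\beta_k(x^k-x^{k-1})-\alpha Hy^k$, $x^0=x^1$, applied to $f(x)=\frac12x^THx$. *)

From HB Require Import structures.
From mathcomp Require Import all_boot all_order all_algebra.
From mathcomp Require Import all_classical all_reals all_analysis.
Set Implicit Arguments. Unset Strict Implicit. Unset Printing Implicit Defensive.
Import Order.TTheory GRing.Theory Num.Theory.
Local Open Scope ring_scope.

Fixpoint bgrowth (R : realType) (alpha lam : R) (beta gamma : nat -> R) (k : nat) : R :=
  match k with
  | 0 => 0
  | k'.+1 => (beta k'.+1 + gamma k'.+1 * alpha * `|lam|)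
               * (1 - 1 / (1 + bgrowth alpha lam beta gamma k'))
             + alpha * `|lam|
  end.

(** The step map is [b ↦ c_k b/(1+b) + a] with [a = α|λ_i| > 0] and a
    nondecreasing convergent coefficient [c_k = β_k + γ_k a].  Since
    [x ↦ x/(1+x)] is nondecreasing with values in [[0,1)], induction shows that
    [b_k] is nondecreasing and bounded by [lim c + a], hence convergent; its
    limit [l > 0] is a fixed point of the limiting map, i.e. a positive root
    of [l² = (lim c - 1 + a) l + a], which is the stated closed form. *)

From HB Require Import structures.
From mathcomp Require Import all_boot all_order all_algebra.
From mathcomp Require Import all_classical all_reals all_analysis.
From mathcomp Require Import ring lra.
Import Order.TTheory GRing.Theory Num.Theory.
Import numFieldNormedType.Exports.
Local Open Scope classical_set_scope.
Local Open Scope ring_scope.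

Lemma pos_root_deg2 (R : rcfType) (c a x : R) :
  0 < a -> 0 <= x -> x ^+ 2 = c * x + a ->
  x = c / 2 + Num.sqrt (c ^+ 2 + 4 * a) / 2.
Proof.
move=> a_gt0 x_ge0 xE.
have disc_sqr : c ^+ 2 + 4 * a = (2 * x - c) ^+ 2.
  by rewrite sqrrB exprMn xE; ring.
have : 0 <= 2 * x - c by nra.
by rewrite disc_sqr sqrtr_sqr => /ger0_norm ->; field.
Qed.

Lemma cvgn_limn_nondecreasingS (R : realType) (u : R ^nat) (M : R) :
  (forall n, (1 <= n)%N -> u n <= u n.+1) ->
  (forall n, (1 <= n)%N -> u n <= M) -> u @ \oo --> limn u.
Proof.
move=> u_nd u_le.
have : cvgn [sequence u n.+1]_n.
  apply: nondecreasing_is_cvgn; first by apply/nondecreasing_seqP => n; exact: u_nd.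
  by exists M => _ [n _ <-]; exact: u_le.
by move=> /cvg_ex[l]; rewrite cvg_shiftS => ul; rewrite (cvg_lim _ ul).
Qed.

Section FracOneAdd.
Context {R : realFieldType}.
Implicit Types x y : R.

Definition frac1D x := x / (1 + x).

Lemma frac1DE x : 0 <= x -> 1 - 1 / (1 + x) = frac1D x.
Proof. by move=> x_ge0; rewrite /frac1D; field; rewrite gt_eqF // ltr_pwDl. Qed.

Lemma frac1D_ge0 x : 0 <= x -> 0 <= frac1D x.
Proof. by move=> x_ge0; rewrite divr_ge0 // addr_ge0. Qed.

Lemma frac1D_le1 x : 0 <= x -> frac1D x <= 1.
Proof. by move=> x_ge0; rewrite ler_pdivrMr ?mul1r ?lerDr // ltr_pwDl. Qed.

Lemma ler_frac1D x y : 0 <= x -> x <= y -> frac1D x <= frac1D y.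
Proof.
move=> x_ge0 xy; have y_ge0 : 0 <= y by exact: le_trans xy.
rewrite /frac1D ler_pdivrMr ?ltr_pwDl // mulrAC ler_pdivlMr ?ltr_pwDl //.
nra.
Qed.

End FracOneAdd.

Section GrowthRecursion.
Variables (R : realType) (a cbar : R) (c b : nat -> R).
Hypothesis a_gt0 : 0 < a.
Hypothesis c_ge0 : forall k, 0 <= c k.
Hypothesis c_nondecreasing : nondecreasing_seq c.
Hypothesis c_cvg : c @ \oo --> cbar.
Hypothesis b0 : b 0 = 0.
Hypothesis bS : forall k, b k.+1 = c k * (1 - 1 / (1 + b k)) + a.

Lemma growth_ge0 k : 0 <= b k.
Proof.
elim: k => [|k IH]; first by rewrite b0.
by rewrite bS frac1DE // addr_ge0 ?(ltW a_gt0) // mulr_ge0 ?c_ge0 ?frac1D_ge0.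
Qed.

Lemma growthS k : b k.+1 = c k * frac1D (b k) + a.
Proof. by rewrite bS frac1DE ?growth_ge0. Qed.

Lemma growth_nondecreasing : nondecreasing_seq b.
Proof.
apply/nondecreasing_seqP; elim=> [|k IH].
  by rewrite growthS b0 /frac1D mul0r mulr0 add0r ltW.
rewrite [leRHS]growthS [leLHS]growthS lerD2r.
apply: ler_pM; rewrite ?frac1D_ge0 ?growth_ge0 //.
  by move/nondecreasing_seqP: c_nondecreasing.
exact: ler_frac1D (growth_ge0 k) IH.
Qed.

Lemma c_le_lim k : c k <= cbar.
Proof.
have := nondecreasing_cvgn_le c_nondecreasing (cvgP _ c_cvg) k.
by rewrite (cvg_lim _ c_cvg).
Qed.

Lemma growth_le k : b k <= cbar + a.
Proof.
have cbar_ge0 : 0 <= cbar := le_trans (c_ge0 0) (c_le_lim 0).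
case: k => [|k]; first by rewrite b0 addr_ge0 // ltW.
rewrite growthS lerD2r -[cbar]mulr1.
by apply: ler_pM; rewrite ?c_le_lim ?frac1D_le1 ?frac1D_ge0 ?growth_ge0.
Qed.

Let l := limn b.

Lemma growth_cvg_limn : b @ \oo --> l.
Proof.
apply: (@cvgn_limn_nondecreasingS _ _ (cbar + a)) => [n _|n _].
  by apply/nondecreasing_seqP: n; exact: growth_nondecreasing.
exact: growth_le.
Qed.

Lemma limn_growth_gt0 : 0 < l.
Proof.
apply: (lt_le_trans a_gt0); have := nondecreasing_cvgn_le growth_nondecreasing.
by move=> /(_ (cvgP _ growth_cvg_limn) 1%N); rewrite growthS b0 /frac1D mul0r mulr0 add0r.
Qed.

Let limn_growth1D_neq0 : 1 + l != 0.
Proof. by rewrite gt_eqF // ltr_pwDl // ltW // limn_growth_gt0. Qed.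

Lemma limn_growth_fixed : l = cbar * frac1D l + a.
Proof.
have step_cvg : c n * frac1D (b n) + a @[n --> \oo] --> cbar * frac1D l + a.
  apply: cvgD; last exact: cvg_cst.
  apply: cvgM; first exact: c_cvg.
  apply: cvgM; first exact: growth_cvg_limn.
  by apply: cvgV => //; apply: cvgD; [exact: cvg_cst | exact: growth_cvg_limn].
have bS_cvg : c n * frac1D (b n) + a @[n --> \oo] --> l.
  have -> : (fun n => c n * frac1D (b n) + a) = (fun n => b n.+1).
    by apply/funext => n; rewrite growthS.
  by rewrite cvg_shiftS; exact: growth_cvg_limn.
exact: (cvg_unique _ bS_cvg step_cvg).
Qed.

Lemma growth_cvg :
  b @ \oo --> (cbar - 1 + a) / 2 + Num.sqrt ((cbar - 1 + a) ^+ 2 + 4 * a) / 2.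
Proof.
rewrite -(@pos_root_deg2 _ _ _ l) ?(ltW limn_growth_gt0) //.
  exact: growth_cvg_limn.
have fixE : l * (1 + l) = cbar * l + a * (1 + l).
  by rewrite {1}limn_growth_fixed /frac1D; field.
nra.
Qed.

End GrowthRecursion.

Theorem theorem4p2 (R : realType) (n p : nat) (lambda : nat -> R)
  (alpha : R) (beta gamma : nat -> R) :
  (1 <= p < n)%N ->
  (forall i j : nat, (1 <= i)%N -> (i <= j)%N -> (j <= n)%N -> lambda j <= lambda i) ->
  (forall i : nat, (1 <= i)%N -> (i <= n - p)%N -> 0 <= lambda i) ->
  (forall i : nat, (n - p < i)%N -> (i <= n)%N -> lambda i < 0) ->
  0 < alpha -> alpha < 1 / Num.max (lambda 1%N) (- lambda n) ->
  (forall k : nat, (1 <= k)%N -> 0 <= gamma k <= 1) ->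
  (forall k : nat, (1 <= k)%N -> 0 <= beta k <= 1) ->
  (forall k : nat, (1 <= k)%N -> gamma k <= gamma k.+1) ->
  (forall k : nat, (1 <= k)%N -> beta k <= beta k.+1) ->
  let gbar := limn gamma in
  let bbar := limn beta in
  forall i : nat, (1 <= i)%N -> (i <= n)%N -> lambda i < 0 ->
    let c := bbar - 1 + alpha * `|lambda i| * (1 + gbar) in
    bgrowth alpha (lambda i) beta gamma @ \oo -->
      c / 2 + Num.sqrt (c ^+ 2 + 4 * alpha * `|lambda i|) / 2.
Proof.
move=> _ _ _ _ alpha_gt0 _ gamma01 beta01 gamma_nd beta_nd gbar bbar i _ _ lam_lt0 c.
have gamma_cvg : gamma @ \oo --> gbar.
  by apply: (@cvgn_limn_nondecreasingS _ _ 1) => // k /gamma01 /andP[].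
have beta_cvg : beta @ \oo --> bbar.
  by apply: (@cvgn_limn_nondecreasingS _ _ 1) => // k /beta01 /andP[].
set a := alpha * `|lambda i|.
have a_gt0 : 0 < a by rewrite mulr_gt0 // normr_gt0 lt_eqF.
pose coef k := beta k.+1 + gamma k.+1 * a.
have coef_ge0 k : 0 <= coef k.
  have /andP[? _] := beta01 k.+1 isT; have /andP[? _] := gamma01 k.+1 isT.
  by rewrite addr_ge0 // mulr_ge0 // ltW.
have coef_nondecreasing : nondecreasing_seq coef.
  apply/nondecreasing_seqP => k; apply: lerD; first exact: beta_nd.
  by apply: ler_wpM2r; [exact: ltW | exact: gamma_nd].
have coef_cvg : coef @ \oo --> bbar + gbar * a.
  apply: cvgD; first by rewrite cvg_shiftS.
  by apply: cvgM; [rewrite cvg_shiftS | exact: cvg_cst].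
have -> : c = bbar + gbar * a - 1 + a by rewrite /c -/a; lra.
rewrite -mulrA -/a.
by apply: growth_cvg => // k; rewrite /= -mulrA.
Qed.
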